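(* Let $r,n,p,c$ be integers with $0\le r\le n$ and $0\le p\le n$. Then $F_q(r,n,c,p;k_1,\ldots,k_{n-r})=0$ whenever $k_1\in\{-1,-2,\ldots,-r\}$ or $k_{n-r}\in\{c+1,c+2,\ldots,c+r\}$.
   Context: For integers $0\le r\le n$ and $c$, an $(r,n,c)$-pattern is an array of integers $(a_{i,j})_{1\le i\le r+1,\ i-1\le j\le n+1}$ with $a_{i,i-1}=0$, $a_{i,n+1}=c$, and for all $2\le i\le r+1$, $i-1\le j\le n$: if $a_{i,j}\le a_{i,j+1}$ then $a_{i,j}\le a_{i-1,j}\le a_{i,j+1}$, and if $a_{i,j}>a_{i,j+1}$ then $a_{i,j}>a_{i-1,j}>a_{i,j+1}$. Its norm is $\sum_{i=1}^{r+1}\sum_{j=i}^{n}a_{i,j}$. An inversion is a pair $(a_{i,j},a_{i,j+1})$ with $a_{i,j}>a_{i,j+1}$ and $i\ne1$; $\operatorname{sgn}(a)=(-1)^{\#\text{inversions}}$. $F_q(r,n,c,p;k_1,\ldots,k_{n-r})=q^{-(k_1+\cdots+k_{n-r})}\sum_a\operatorname{sgn}(a)q^{\operatorname{norm}(a)}$, summed over all $(r,n,c)$-patterns with $a_{r+1,r+i}=k_i$ for $1\le i\le n-r$ and exactly $p$ of $a_{1,1},\ldots,a_{1,n}$ odd ($q$ an indeterminate). *)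

From mathcomp Require Import all_boot all_order all_algebra.
Set Implicit Arguments. Unset Strict Implicit. Unset Printing Implicit Defensive.
Import Order.TTheory GRing.Theory Num.Theory.
Local Open Scope ring_scope.

(* An array is a function a : nat -> nat -> int, a i j = a_{i,j} with the
   paper's (1-based row, column) indices; only the entries on the index
   domain 1 <= i <= r+1, i-1 <= j <= n+1 matter. *)

Definition in_dom (r n i j : nat) : bool :=
  [&& (1 <= i)%N, (i <= r.+1)%N, (i.-1 <= j)%N & (j <= n.+1)%N].

Definition is_pattern (r n : nat) (c : int) (a : nat -> nat -> int) : bool :=
  all (fun i => (a i i.-1 == 0) && (a i n.+1 == c)) (iota 1 r.+1) &&
  all (fun i =>
         all (fun j =>
                if a i j <= a i j.+1
                then (a i j <= a i.-1 j) && (a i.-1 j <= a i j.+1)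
                else (a i j > a i.-1 j) && (a i.-1 j > a i j.+1))
             (iota i.-1 (n - i.-1).+1))   (* j = i-1, ..., n *)
      (iota 2 r).

Definition pnorm (r n : nat) (a : nat -> nat -> int) : int :=
  \sum_(1 <= i < r.+2) \sum_(i <= j < n.+1) a i j.

Definition ninv (r n : nat) (a : nat -> nat -> int) : nat :=
  (\sum_(2 <= i < r.+2) \sum_(i.-1 <= j < n.+1) nat_of_bool (a i j.+1 < a i j)%R)%N.

Definition psgn (R : pzRingType) (r n : nat) (a : nat -> nat -> int) : R :=
  (-1) ^+ ninv r n a.

Definition nodd (n : nat) (a : nat -> nat -> int) : nat :=
  (\sum_(1 <= j < n.+1) odd `|a 1%N j|)%N.

Definition bottom_row (r n : nat) (k : nat -> int) (a : nat -> nat -> int) : bool :=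
  all (fun i => a r.+1 (r + i)%N == k i) (iota 1 (n - r)).

(* A bound on the absolute value of all entries of any pattern with the
   given data (by interlacing, all entries lie between min and max of
   0, c, k_1, ..., k_{n-r}). It is only used to enumerate the finite set of
   patterns. *)
Definition pbound (r n : nat) (c : int) (k : nat -> int) : nat :=
  (`|c| + \sum_(1 <= i < (n - r).+1) `|k i|)%N.

(* Encoding arrays with entries in [-B, B] as finite functions. *)
Definition boxT (r n B : nat) := {ffun 'I_r.+1 * 'I_n.+2 -> 'I_(B.*2.+1)}.

Definition arr_of (r n B : nat) (g : boxT r n B) : nat -> nat -> int :=
  fun i j => if in_dom r n i j
             then (g (inord i.-1, inord j) : nat)%:Z - B%:Z else 0.

(* off-domain slots are fixed, so g <-> arr_of g is a bijection onto arrays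
   supported on the index domain with entries in [-B, B] *)
Definition box_ok (r n B : nat) (g : boxT r n B) : bool :=
  [forall x : 'I_r.+1 * 'I_n.+2, ((x.2 : nat) < x.1)%N ==> ((g x : nat) == B)].

Definition Fq (R : comUnitRingType) (q : R) (r n : nat) (c : int) (p : nat)
    (k : nat -> int) : R :=
  let B := pbound r n c k in
  q ^ (- \sum_(1 <= i < (n - r).+1) k i) *
  \sum_(g : boxT r n B |
        [&& box_ok g, is_pattern r n c (arr_of g),
            bottom_row r n k (arr_of g) & nodd n (arr_of g) == p])
     psgn R r n (arr_of g) * q ^ pnorm r n (arr_of g).

From mathcomp Require Import all_boot all_order all_algebra.
From mathcomp Require Import zify.
Set Implicit Arguments. Unset Strict Implicit. Unset Printing Implicit Defensive.
Import Order.TTheory GRing.Theory Num.Theory.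
Local Open Scope ring_scope.

(* No pattern has such a bottom row, so the sum defining F_q is empty.  Along
   the diagonal, a_{i,i-1} = 0 together with interlacing forces
   a_{i+1,i+1} < a_{i,i} < 0 as soon as a_{i+1,i+1} < 0; inductively
   a_{i,i} cannot lie in [-(i-1), -1], which for i = r+1 excludes k_1.
   Symmetrically, a_{i,n+1} = c forces c < a_{i,n} < a_{i+1,n} as soon as
   a_{i+1,n} > c, so a_{i,n} cannot lie in [c+1, c+i-1], excluding k_{n-r}. *)

Definition interlacing (x y z : int) : bool :=
  if x <= z then (x <= y) && (y <= z) else (x > y) && (y > z).

Lemma interlacing_neg_bound (y z : int) (i : nat) :
  interlacing 0 y z -> - (i.+1%:Z) <= z <= -1 -> - (i%:Z) <= y <= -1.
Proof. by rewrite /interlacing; case: ifP => _ /andP [? ?] /andP [? ?]; lia. Qed.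

Lemma interlacing_above_bound (x y c : int) (i : nat) :
  interlacing x y c -> c + 1 <= x <= c + i.+1%:Z -> c + 1 <= y <= c + i%:Z.
Proof. by rewrite /interlacing; case: ifP => _ /andP [? ?] /andP [? ?]; lia. Qed.

Section Pattern.

Variables (r n : nat) (c : int) (a : nat -> nat -> int).
Hypotheses (le_rn : (r <= n)%N) (pattern_a : is_pattern r n c a).

Lemma pattern_borders i : (i <= r)%N -> a i.+1 i = 0 /\ a i.+1 n.+1 = c.
Proof.
case/andP: pattern_a => /allP borders _ ir.
have /andP [/eqP -> /eqP ->] // : (a i.+1 i == 0) && (a i.+1 n.+1 == c).
by apply: (borders i.+1); rewrite mem_iota; lia.
Qed.

Lemma pattern_interlacing i j : (i < r)%N -> (i < j <= n)%N ->
  interlacing (a i.+2 j) (a i.+1 j) (a i.+2 j.+1).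
Proof.
case/andP: pattern_a => _ /allP rows ir ij.
have row : i.+2 \in iota 2 r by rewrite mem_iota; lia.
by move/allP: (rows _ row); apply; rewrite mem_iota /=; lia.
Qed.

Lemma pattern_diag_not_neg i : (i <= r)%N -> ~~ (- (i%:Z) <= a i.+1 i.+1 <= -1).
Proof.
elim: i => [|i IH] ir; first by apply/negP => /andP [? ?]; lia.
apply/negP => diag; move/negP: (IH (ltnW ir)); apply; move: diag.
apply: interlacing_neg_bound.
by rewrite -(pattern_borders ir).1; apply: pattern_interlacing => //; lia.
Qed.

Lemma pattern_last_not_above i : (i <= r)%N ->
  ~~ (c + 1 <= a i.+1 n <= c + i%:Z).
Proof.
elim: i => [|i IH] ir; first by apply/negP => /andP [? ?]; lia.
apply/negP => last; move/negP: (IH (ltnW ir)); apply; move: last.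
apply: interlacing_above_bound.
by rewrite -(pattern_borders ir).2; apply: pattern_interlacing => //; lia.
Qed.

End Pattern.

Lemma bottom_row_ends (r n : nat) (k : nat -> int) (a : nat -> nat -> int) :
  (r < n)%N -> bottom_row r n k a ->
  a r.+1 r.+1 = k 1%N /\ a r.+1 n = k (n - r)%N.
Proof.
move=> rn /allP bottom; split.
- have /eqP <- : a r.+1 (r + 1)%N == k 1%N by apply: bottom; rewrite mem_iota; lia.
  by rewrite addn1.
- have /eqP <- : a r.+1 (r + (n - r))%N == k (n - r)%N.
    by apply: bottom; rewrite mem_iota; lia.
  by rewrite subnKC // ltnW.
Qed.

Lemma no_pattern_with_bottom_row (r n : nat) (c : int) (k : nat -> int)
    (a : nat -> nat -> int) :
  (r < n)%N -> is_pattern r n c a -> bottom_row r n k a ->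
  ((- (r%:Z) <= k 1%N <= -1) \/ (c + 1 <= k (n - r)%N <= c + r%:Z)) -> False.
Proof.
move=> rn pattern_a /(bottom_row_ends rn) [<- <-] [].
- exact/negP/(pattern_diag_not_neg (ltnW rn) pattern_a (leqnn r)).
- exact/negP/(pattern_last_not_above (ltnW rn) pattern_a (leqnn r)).
Qed.

Theorem lemma17 (R : comUnitRingType) (q : R) (r n : nat) (c : int) (p : nat)
    (k : nat -> int) :
  q \is a GRing.unit -> (r < n)%N -> (p <= n)%N ->
  ((- (r%:Z) <= k 1%N <= -1) \/ (c + 1 <= k (n - r)%N <= c + r%:Z)) ->
  Fq q r n c p k = 0.
Proof.
move=> _ rn _ hk; rewrite /Fq [X in _ * X]big1 ?mulr0 //.
move=> g /and4P [_ pattern_g bottom_g _].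
by case: (no_pattern_with_bottom_row rn pattern_g bottom_g hk).
Qed.
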